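(* Let $\tau,t\in\mathbb{R}$ and let $P_n(x;\tau,t)$ be the monic orthogonal polynomials for the weight $\omega(x;\tau,t)=\exp(-x^6+\tau x^4+tx^2)$ on $\mathbb{R}$, with recurrence coefficients $\beta_n$. Write $C_n=\beta_{n-1}+\beta_n+\beta_{n+1}$. Then for $n\ge1$ $$\frac{d^2P_n}{dx^2}+R_n(x;\tau,t)\frac{dP_n}{dx}+T_n(x;\tau,t)P_n=0,$$ where $$R_n=2x\left\{t-3x^4+2\tau x^2-\frac{2\{6x^2-2\tau+3(\beta_n+\beta_{n+1})\}}{6x^4-4\tau x^2-2t+6\beta_nC_n+6\beta_{n+1}C_{n+1}+(\beta_n+\beta_{n+1})(6x^2-4\tau)}\right\},$$ and \begin{align*} T_n&=2\beta_n(3C_n-2\tau+9x^2)-4x^2\beta_n(3C_n-2\tau+3x^2)\{\beta_n(3C_n-2\tau+3x^2)-t+3x^4-2\tau x^2\}\\ &\quad+\beta_{n}\{6C_{n-1}\beta_{n-1}+6C_n\beta_n+(\beta_{n-1}+\beta_n)(6x^2-4\tau)-2t+6x^4-4\tau x^2\}\\ &\qquad\times\{6C_n\beta_n+6C_{n+1}\beta_{n+1}+(\beta_n+\beta_{n+1})(6x^2-4\tau)-2t+6x^4-4\tau x^2\}\\ &\quad+\frac{4x^2\beta_n(3C_n-2\tau+3x^2)\{3(\beta_n+\beta_{n+1})-2\tau+6x^2\}}{2\tau(\beta_n+\beta_{n+1})-3x^2(\beta_n+\beta_{n+1})-3C_n\beta_n-3C_{n+1}\beta_{n+1}+t-3x^4+2\tau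 x^2}. \end{align*}
   Context: The monic polynomials $P_n(x;\tau,t)$ of exact degree $n$ are orthogonal with respect to $\omega(x;\tau,t)$ on $\mathbb{R}$. They satisfy $P_{n+1}(x)=xP_n(x)-\beta_nP_{n-1}(x)$ with $P_{-1}=0$, $P_0=1$, where $\beta_n>0$ for $n\ge1$. The convention $\beta_0=0$ is used. *)

From HB Require Import structures.
From mathcomp Require Import all_boot all_order all_algebra.
From mathcomp Require Import classical_sets reals ereal sequences exp measure lebesgue_measure lebesgue_integral.
Set Implicit Arguments. Unset Strict Implicit. Unset Printing Implicit Defensive.
Import Order.TTheory GRing.Theory Num.Theory.
Local Open Scope ring_scope.

Definition omega {R : realType} (tau t : R) (x : R) : R :=
  expR (- x ^+ 6 + tau * x ^+ 4 + t * x ^+ 2).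

Definition monic_OPS {R : realType} (tau t : R) (P : nat -> {poly R}) : Prop :=
  (forall n, P n \is monic /\ size (P n) = n.+1) /\
  (forall m n, m <> n ->
     (\int[@lebesgue_measure R]_(x in [set: R])
        ((P m).[x] * (P n).[x] * omega tau t x)%:E = 0)%E).

Definition recurrence_coeffs {R : realType} (P : nat -> {poly R}) (beta : nat -> R)
  : Prop :=
  P 0%N = 1 /\ beta 0%N = 0 /\ (forall n, (1 <= n)%N -> 0 < beta n) /\
  P 1%N = 'X * P 0%N /\
  (forall n, (1 <= n)%N -> P n.+1 = 'X * P n - beta n *: P n.-1).

(* C_n = beta_{n-1} + beta_n + beta_{n+1} (used for n >= 1; C_0 only
   appears multiplied by beta_0 = 0). *)
Definition Cn {R : realType} (beta : nat -> R) (n : nat) : R :=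
  beta n.-1 + beta n + beta n.+1.

Definition denR {R : realType} (tau t : R) (beta : nat -> R) (n : nat) (x : R) : R :=
  6 * x ^+ 4 - 4 * tau * x ^+ 2 - 2 * t + 6 * beta n * Cn beta n
  + 6 * beta n.+1 * Cn beta n.+1 + (beta n + beta n.+1) * (6 * x ^+ 2 - 4 * tau).

Definition denT {R : realType} (tau t : R) (beta : nat -> R) (n : nat) (x : R) : R :=
  2 * tau * (beta n + beta n.+1) - 3 * x ^+ 2 * (beta n + beta n.+1)
  - 3 * Cn beta n * beta n - 3 * Cn beta n.+1 * beta n.+1
  + t - 3 * x ^+ 4 + 2 * tau * x ^+ 2.

Definition Rn {R : realType} (tau t : R) (beta : nat -> R) (n : nat) (x : R) : R :=
  2 * x * (t - 3 * x ^+ 4 + 2 * tau * x ^+ 2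
           - 2 * (6 * x ^+ 2 - 2 * tau + 3 * (beta n + beta n.+1))
             / denR tau t beta n x).

Definition Tn {R : realType} (tau t : R) (beta : nat -> R) (n : nat) (x : R) : R :=
  2 * beta n * (3 * Cn beta n - 2 * tau + 9 * x ^+ 2)
  - 4 * x ^+ 2 * beta n * (3 * Cn beta n - 2 * tau + 3 * x ^+ 2)
      * (beta n * (3 * Cn beta n - 2 * tau + 3 * x ^+ 2) - t + 3 * x ^+ 4
         - 2 * tau * x ^+ 2)
  + beta n
      * (6 * Cn beta n.-1 * beta n.-1 + 6 * Cn beta n * beta n
         + (beta n.-1 + beta n) * (6 * x ^+ 2 - 4 * tau) - 2 * t + 6 * x ^+ 4
         - 4 * tau * x ^+ 2)
      * (6 * Cn beta n * beta n + 6 * Cn beta n.+1 * beta n.+1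
         + (beta n + beta n.+1) * (6 * x ^+ 2 - 4 * tau) - 2 * t + 6 * x ^+ 4
         - 4 * tau * x ^+ 2)
  + 4 * x ^+ 2 * beta n * (3 * Cn beta n - 2 * tau + 3 * x ^+ 2)
      * (3 * (beta n + beta n.+1) - 2 * tau + 6 * x ^+ 2)
      / denT tau t beta n x.

(* Chen-Ismail ladder operators. Write omega = exp (- V) with
   V = x^6 - tau x^4 - t x^2 and L p = \int p omega. Since p omega decays faster
   than 1 / (1 + x^2), integration by parts gives L (p') = L (p V').
   For the explicit polynomials A_n, B_n below, the recurrence alone shows that
   beta_n A_n P_(n-1) - B_n P_n lies in the span of P_(n-1), P_(n-3), P_(n-5),
   and that V' P_n minus it lies in the span of P_(n+1), P_(n+3), P_(n+5).
   Hence D = P_n' - (beta_n A_n P_(n-1) - B_n P_n) has degree < n, and by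
   integration by parts L (D P_k) = L ((V' P_n - beta_n A_n P_(n-1) + B_n P_n) P_k)
   = 0 for k < n, so D = 0. Differentiating this lowering relation once more,
   using it at n - 1 and eliminating P_(n-2) with the recurrence gives the
   equation; both denominators in R_n and T_n are multiples of A_n(x). *)

From HB Require Import structures.
From mathcomp Require Import all_boot all_order all_algebra.
From mathcomp Require Import all_classical all_reals all_analysis measurable_realfun.
From mathcomp Require Import ring lra zify.
Set Implicit Arguments. Unset Strict Implicit. Unset Printing Implicit Defensive.
Import Order.TTheory GRing.Theory Num.Theory.
Import numFieldNormedType.Exports.
Local Open Scope ring_scope.

Section Ladder.
Variables (R : realType) (tau t : R) (P : nat -> {poly R}) (beta : nat -> R).

Definition potential : {poly R} := 'X^6 - tau%:P * 'X^4 - t%:P * 'X^2.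

Definition ladderA n : {poly R} :=
  6%:P * 'X^4 + (6 * (beta n + beta n.+1) - 4 * tau)%:P * 'X^2
  + (6 * beta n * Cn beta n + 6 * beta n.+1 * Cn beta n.+1
     - 4 * tau * (beta n + beta n.+1) - 2 * t)%:P.

Definition ladderB n : {poly R} :=
  (6 * beta n)%:P * 'X^3 + (6 * beta n * Cn beta n - 4 * tau * beta n)%:P * 'X.

Definition lowering n : {poly R} :=
  (beta n)%:P * ladderA n * P n.-1 - ladderB n * P n.

Hypotheses (beta0 : beta 0 = 0)
  (P_rec : forall n, P n.+1 = 'X * P n - (beta n)%:P * P n.-1).

Lemma deriv_potential_mulP_sub_lowering n : exists a b c : R,
  potential^`() * P n - lowering n =
  a%:P * P n.+1 + b%:P * P n.+3 + c%:P * P n.+4.+1.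
Proof.
exists (6 * beta n * Cn beta n + 6 * beta n.+1 * Cn beta n.+1
        + 6 * beta n.+2 * Cn beta n.+2 + 6 * beta n * beta n.+2
        - 4 * tau * Cn beta n.+1 - 2 * t),
  (6 * (beta n + beta n.+1 + beta n.+2 + beta n.+3 + beta n.+4) - 4 * tau), 6.
by rewrite /potential /lowering /ladderA /ladderB /Cn !poly.derivE !P_rec /=; ring.
Qed.

(* For n <= 4 the truncated indices n - 3 and n - 5 are junk; the matching
   coefficients then contain beta 0 = 0. *)
Lemma lowering_expansion n : (1 <= n)%N -> exists a b c : R,
  lowering n = a%:P * P (n - 1) + b%:P * P (n - 3) + c%:P * P (n - 5).
Proof.
move=> n_gt0.
exists (beta n * (6 * beta n.-1 * Cn beta n.-1 + 6 * beta n * Cn beta n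
                    + 6 * beta n.+1 * Cn beta n.+1 + 6 * beta n.-1 * beta n.+1
                    - 4 * tau * Cn beta n - 2 * t)),
  (beta n.-2 * beta n.-1 * beta n
   * (6 * (beta n.-2.-1 + beta n.-2 + beta n.-1 + beta n + beta n.+1) - 4 * tau)),
  (6 * beta n.-2.-2 * beta n.-2.-1 * beta n.-2 * beta n.-1 * beta n).
rewrite /lowering /ladderA /ladderB /Cn.
case: n n_gt0 => [|[|[|[|[|k]]]]] // _; rewrite ?subSS ?subn0 ?sub0n /=;
  by rewrite !P_rec /= ?beta0; ring.
Qed.

End Ladder.

Lemma size_sub_lead_monic (R : nzRingType) (p q : {poly R}) s :
  p \is monic -> size p = s.+1 -> size q = s.+1 ->
  (size (q - lead_coef q *: p)%R <= s)%N.
Proof.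
move=> /monicP p_monic size_p size_q; apply/leq_sizeP => j.
rewrite leq_eqVlt => /predU1P[<-|lt_sj]; rewrite coefB coefZ.
  by move: p_monic; rewrite /lead_coef size_p size_q /= => ->; rewrite mulr1 subrr.
by rewrite !nth_default ?mulr0 ?subr0 ?size_p ?size_q.
Qed.

Section OrthogonalFunctional.
Variables (R : fieldType) (P : nat -> {poly R}) (L : {linear {poly R} -> R^o}).
Hypotheses (P_monic : forall n, P n \is monic) (size_P : forall n, size (P n) = n.+1)
  (L_orth : forall m n, m <> n -> L (P m * P n) = 0)
  (L_norm : forall n, L (P n * P n) != 0).

Lemma orthP_size_le m (q : {poly R}) : (size q <= m)%N -> L (P m * q) = 0.
Proof.
suff orth_le s : (s <= m)%N -> forall q : {poly R}, (size q <= s)%N -> L (P m * q) = 0.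
  exact: orth_le.
elim: s => [|s IHs] le_sm {}q.
  by rewrite leqn0 size_poly_eq0 => /eqP->; rewrite mulr0 linear0.
rewrite leq_eqVlt => /predU1P[size_q|]; last exact: IHs (ltnW le_sm) q.
have size_r := size_sub_lead_monic (P_monic s) (size_P s) size_q.
rewrite -(subrK (lead_coef q *: P s) q) mulrDr linearD IHs ?(ltnW le_sm) //.
rewrite -scalerAr linearZ /= L_orth ?scaler0 ?add0r // => eq_ms.
by rewrite eq_ms ltnn in le_sm.
Qed.

Lemma eq0_orthP n (D : {poly R}) : (size D <= n)%N ->
  (forall k, (k < n)%N -> L (D * P k) = 0) -> D = 0.
Proof.
move=> le_Dn D_orth; apply/eqP; apply: contraT => D_neq0.
have size_D : size D = (size D).-1.+1 by rewrite prednK // lt0n size_poly_eq0.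
set s := (size D).-1 in size_D.
have size_r := size_sub_lead_monic (P_monic s) (size_P s) size_D.
have := D_orth s; rewrite -size_D => /(_ le_Dn).
rewrite -(subrK (lead_coef D *: P s) D) mulrDl linearD mulrC orthP_size_le //.
rewrite -scalerAl linearZ /= add0r => /eqP.
by rewrite mulf_eq0 lead_coef_eq0 (negPf D_neq0) (negPf (L_norm s)).
Qed.

End OrthogonalFunctional.

Section LoweringOperator.
Variables (R : realType) (tau t : R) (P : nat -> {poly R}) (beta : nat -> R)
  (L : {linear {poly R} -> R^o}).
Hypotheses (P_monic : forall n, P n \is monic) (size_P : forall n, size (P n) = n.+1)
  (L_orth : forall m n, m <> n -> L (P m * P n) = 0)
  (L_deriv : forall p, L p^`() = L (p * (potential tau t)^`()))
  (L_P0 : 0 < L (P 0 * P 0))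
  (beta0 : beta 0 = 0) (beta_gt0 : forall n, (0 < n)%N -> 0 < beta n)
  (P_rec : forall n, P n.+1 = 'X * P n - (beta n)%:P * P n.-1).

Lemma normP_rec k : L (P k.+1 * P k.+1) = beta k.+1 * L (P k * P k).
Proof.
have -> : P k.+1 * P k.+1
    = P k.+2 * P k + beta k.+1 *: (P k * P k) - beta k *: (P k.+1 * P k.-1).
  by rewrite -!mul_polyC (P_rec k.+1) {2}(P_rec k) /=; ring.
have orth2 : L (P k.+2 * P k) = 0 by apply: L_orth; lia.
have orth1 : L (P k.+1 * P k.-1) = 0 by apply: L_orth; lia.
by rewrite linearB linearD !linearZ /= orth1 orth2 add0r oppr0 scaler0 addr0.
Qed.

Lemma normP_gt0 k : 0 < L (P k * P k).
Proof. by elim: k => [|k IHk] //; rewrite normP_rec mulr_gt0 ?beta_gt0. Qed.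

Lemma size_deriv_P k : (size (P k)^`() <= k)%N.
Proof.
have P_neq0 : P k != 0 by rewrite -size_poly_eq0 size_P.
by have := lt_size_deriv P_neq0; rewrite size_P.
Qed.

Lemma size_lowering n : (1 <= n)%N -> (size (lowering tau t P beta n) <= n)%N.
Proof.
have size_CP (c : R) k : (k < n)%N -> (size (c%:P * P k)%R <= n)%N.
  by move=> lt_kn; rewrite mul_polyC (leq_trans (size_scale_leq _ _)) ?size_P.
move=> n_gt0; have [a [b [c ->]]] := lowering_expansion tau t beta0 P_rec n_gt0.
have size_D (p q : {poly R}) :
    (size p <= n)%N -> (size q <= n)%N -> (size (p + q)%R <= n)%N.
  by move=> le_pn le_qn; rewrite (leq_trans (size_polyD _ _)) // geq_max le_pn.
by apply: (size_D); [apply: (size_D)|]; apply: size_CP; lia.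
Qed.

Lemma orth_deriv_P_sub_lowering n k : (k < n)%N ->
  L (((P n)^`() - lowering tau t P beta n) * P k) = 0.
Proof.
move=> lt_kn.
have L_dP : L ((P n)^`() * P k) = L (P n * P k * (potential tau t)^`()).
  have orth_dPk : L (P n * (P k)^`()) = 0.
    apply: (orthP_size_le P_monic size_P L_orth).
    exact: leq_trans (size_deriv_P k) (ltnW lt_kn).
  by rewrite -L_deriv derivM linearD orth_dPk addr0.
rewrite mulrBl linearB L_dP -linearB.
have -> : P n * P k * (potential tau t)^`() - lowering tau t P beta n * P k
    = ((potential tau t)^`() * P n - lowering tau t P beta n) * P k by ring.
have [a [b [c ->]]] := deriv_potential_mulP_sub_lowering tau t P_rec n.
rewrite !mulrDl !linearD -!mulrA !mul_polyC !linearZ /= !L_orth; try lia.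
by rewrite !scaler0 !addr0.
Qed.

Lemma deriv_P n : (P n)^`() = lowering tau t P beta n.
Proof.
case: n => [|n].
  have /size1_polyC -> : (size (P 0) <= 1)%N by rewrite size_P.
  by rewrite derivC /lowering /ladderB beta0 /=; ring.
apply/eqP; rewrite -subr_eq0; apply/eqP.
apply: (eq0_orthP (n := n.+1) P_monic size_P L_orth (fun k => lt0r_neq0 (normP_gt0 k))).
  by rewrite (leq_trans (size_polyD _ _)) // geq_max size_polyN size_lowering //
    -ltnS -(size_P n.+1) lt_size_deriv // -size_poly_eq0 size_P.
by move=> k; apply: orth_deriv_P_sub_lowering.
Qed.

End LoweringOperator.

Lemma lowering_ode (R : realType) (tau t : R) (P : nat -> {poly R}) (beta : nat -> R) :
  (forall n, P n.+1 = 'X * P n - (beta n)%:P * P n.-1) ->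
  (forall n, (P n)^`() = lowering tau t P beta n) ->
  forall n, (1 <= n)%N -> forall x, denR tau t beta n x != 0 -> denT tau t beta n x != 0 ->
  (P n)^`(2).[x] + Rn tau t beta n x * (P n)^`().[x] + Tn tau t beta n x * (P n).[x] = 0.
Proof.
move=> P_rec dP [//|n] _ x denR_neq0 denT_neq0.
rewrite derivSn derivn1 dP /lowering !poly.derivE !dP /lowering P_rec.
rewrite /ladderA /ladderB ?poly.derivE !hornerE /=.
rewrite /Rn /Tn /denR /denT /Cn /= in denR_neq0 denT_neq0 *.
by field; rewrite denR_neq0 denT_neq0.
Qed.

Section Growth.
Variable R : realType.

Lemma oneDsqr_gt0 (x : R) : 0 < oneDsqr x.
Proof. exact: lt_le_trans ltr01 (oneDsqr_ge1 x). Qed.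

Lemma normr_le_oneDsqr (x : R) : `|x| <= oneDsqr x.
Proof. by rewrite /oneDsqr -(real_normK (num_real x)); nra. Qed.

Lemma poly_growth (p : {poly R}) :
  exists2 S, 0 <= S & forall x, `|p.[x]| <= S * oneDsqr x ^+ size p.
Proof.
exists (\sum_(i < size p) `|p`_i|) => [|x]; first exact: sumr_ge0.
rewrite horner_coef mulr_suml (le_trans (ler_norm_sum _ _ _)) //; apply: ler_sum => i _.
rewrite normrM normrX ler_wpM2l // (le_trans (lerXn2r _ _ _ (normr_le_oneDsqr x))) //
  ?nnegrE ?(ltW (oneDsqr_gt0 x)) //.
exact/ler_weXn2l/ltnW.
Qed.

Lemma cubic_bound (a b : R) :
  exists c, forall y, 0 <= y -> - y ^+ 3 + a * y ^+ 2 + b * y <= c.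
Proof.
set K := `|a| + `|b| + 1.
have K_ge1 : 1 <= K by rewrite /K lerDr addr_ge0.
have a_le : a <= K by rewrite /K; have := ler_norm a; have := normr_ge0 b; lra.
have b_le : b <= K by rewrite /K; have := ler_norm b; have := normr_ge0 a; lra.
exists (4 * K ^+ 3 + 2 * K ^+ 2) => y y_ge0.
have : a * y ^+ 2 + b * y <= K * y ^+ 2 + K * y.
  by rewrite lerD // ler_wpM2r ?sqr_ge0.
have Ky_ge0 : 0 <= K * y by rewrite mulr_ge0 // (le_trans ler01).
have [le_y2K|lt_2Ky] := lerP y (2 * K).
  have : K * y ^+ 2 <= K * (2 * K) ^+ 2.
    by rewrite ler_wpM2l ?(le_trans ler01) // ler_sqr ?nnegrE // (le_trans y_ge0).
  have : K * y <= K * (2 * K) by rewrite ler_wpM2l // (le_trans ler01).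
  have : 0 <= y ^+ 3 by rewrite exprn_ge0.
  lra.
have : 2 * K * y ^+ 2 <= y * y ^+ 2 by rewrite ler_wpM2r ?sqr_ge0 ?ltW.
have : y ^+ 3 = y * y ^+ 2 by rewrite exprS.
have : K * y <= K * y ^+ 2.
  by rewrite ler_wpM2l ?(le_trans ler01) // expr2 ler_peMl //; lra.
have : 0 <= K ^+ 2 by rewrite sqr_ge0.
have : 0 <= K ^+ 3 by rewrite exprn_ge0 // (le_trans ler01).
lra.
Qed.

End Growth.

Section IntegralR.
Variable R : realType.
Local Open Scope classical_set_scope.
Notation mu := (@lebesgue_measure R).

Lemma ge0_continuous_FTC_R (f F : R -> R) (l1 l2 : R) :
  (forall x, 0 <= f x) -> continuous f ->
  (forall x, is_derive x (1 : R) F (f x)) ->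
  F x @[x --> +oo] --> l1 -> F x @[x --> -oo] --> l2 ->
  (\int[mu]_(x in [set: R]) (f x)%:E = (l1 - l2)%:E)%E.
Proof.
move=> f_ge0 f_cont F_deriv F_l1 F_l2.
pose I i := `[(- i%:R)%R, +oo[ : set R.
have F_derivable x : derivable F x 1 by case: (F_deriv x).
have F_derive1 x : F^`() x = f x by rewrite derive1E; case: (F_deriv x).
have F_cont : continuous F.
  by move=> x; apply/differentiable_continuous/derivable1_diffP.
have int_I i : (\int[mu]_(x in I i) (f x)%:E = (l1 - F (- i%:R))%:E)%E.
  rewrite (@ge0_continuous_FTC2y _ f F _ l1) ?EFinB //.
  - exact: continuous_subspaceT.
  - exact: cvg_at_right_filter (F_cont _).
have I_nd : nondecreasing_seq I.
  move=> i j le_ij; rewrite subsetEset => x; rewrite /I /= !in_itv /= !andbT.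
  by apply: le_trans; rewrite lerN2 ler_nat.
have I_cover : \bigcup_i I i = [set: R].
  apply/seteqP; split => // x _; exists (Num.truncn `|x|).+1 => //.
  rewrite /I /= in_itv /= andbT lerNl (le_trans (ler_norm _)) // normrN.
  exact/ltW/truncnS_gt.
have := @ge0_nondecreasing_set_cvg_integral _ (measurableTypeR R) R I (EFin \o f) mu
  I_nd (fun i => measurable_itv _).
have f_mI i : measurable_fun (I i) (EFin \o f).
  by apply/measurable_EFinP/measurable_funTS; exact: continuous_measurable_fun.
move=> /(_ f_mI (fun i x _ => f_ge0 x)); rewrite I_cover (funext int_I) => cvg_int.
have cvg_l : (l1 - F (- i%:R))%:E @[i --> \oo] --> (l1 - l2)%:E.
  apply: cvg_EFin; first exact: nearW.
  apply: cvgB; first exact: cvg_cst.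
  exact: cvg_comp cvgr_idn ((cvgNy_compNP F (nbhs l2)).1 F_l2).
exact: cvg_unique _ cvg_int cvg_l.
Qed.

Lemma cvgNy_atan : atan x @[x --> -oo] --> (- (pi / 2) : R).
Proof.
apply/cvgNy_compNP; rewrite (_ : _ \o _ = fun x => - atan x); last first.
  by apply/funext => x /=; rewrite atanN.
by apply: cvgN; exact: cvgy_atan.
Qed.

Lemma integral_oneDsqrV :
  (\int[mu]_(x in [set: R]) ((oneDsqr x)^-1)%:E = pi%:E)%E.
Proof.
rewrite (@ge0_continuous_FTC_R _ atan (pi / 2) (- (pi / 2))).
- by rewrite opprK -splitr.
- by move=> x; rewrite invr_ge0 ltW ?oneDsqr_gt0.
- exact: continuous_oneDsqrV.
- exact: cvgy_atan.
- exact: cvgNy_atan.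
Qed.

Lemma integrable_oneDsqrV : mu.-integrable [set: R] (fun x => ((oneDsqr x)^-1)%:E).
Proof.
apply/integrableP; split.
  by apply/measurable_EFinP; exact: continuous_measurable_fun continuous_oneDsqrV.
under eq_integral => x _ do rewrite /= ger0_norm ?invr_ge0 ?ltW ?oneDsqr_gt0 //.
by rewrite integral_oneDsqrV ltry.
Qed.

Section DominatedByOneDsqrV.
Variables (f : R -> R) (M : R).
Hypothesis f_le : forall x, `|f x| <= M / oneDsqr x.

Lemma dominated_ge0 : 0 <= M.
Proof.
have := le_trans (normr_ge0 _) (f_le 0).
by rewrite pmulr_lge0 // invr_gt0 oneDsqr_gt0.
Qed.

Lemma dominated_integrable :
  continuous f -> mu.-integrable [set: R] (fun x => (f x)%:E).
Proof.
move=> f_cont; apply: (le_integrable measurableT _ _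
  (integrableZl measurableT M integrable_oneDsqrV)).
  by apply/measurable_EFinP; exact: continuous_measurable_fun.
move=> x _; have oneDsqrV_ge0 : 0 <= (oneDsqr x)^-1 by rewrite invr_ge0 ltW ?oneDsqr_gt0.
by rewrite /= lee_fin normrM (ger0_norm dominated_ge0) (ger0_norm oneDsqrV_ge0).
Qed.

Lemma dominated_cvgy0 : f x @[x --> +oo] --> 0.
Proof.
have oneDsqrV_cvg0 : (oneDsqr x)^-1 @[x --> +oo] --> (0 : R).
  apply/gtr0_cvgV0; first by apply: nearW => x; exact: oneDsqr_gt0.
  apply: (@ger_cvgy _ _ _ _ id); last exact: cvg_id.
  by apply: nearW => x; exact: le_trans (ler_norm x) (normr_le_oneDsqr x).
apply: (@squeeze_cvgr _ _ _ _ (fun x => - (M / oneDsqr x)) (fun x => M / oneDsqr x)).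
- by apply: nearW => x; rewrite -ler_norml f_le.
- by rewrite -oppr0 -(mulr0 M); apply: cvgN; exact: cvgMl_tmp.
- by rewrite -(mulr0 M); exact: cvgMl_tmp.
Qed.

End DominatedByOneDsqrV.

Lemma dominated_cvgNy0 (f : R -> R) (M : R) :
  (forall x, `|f x| <= M / oneDsqr x) -> f x @[x --> -oo] --> 0.
Proof.
move=> f_le; apply/cvgNy_compNP; apply: (@dominated_cvgy0 _ M) => x /=.
by have := f_le (- x); rewrite /oneDsqr sqrrN.
Qed.

Lemma dominated_continuous_FTC_R (f F : R -> R) (M l1 l2 : R) :
  (forall x, `|f x| <= M / oneDsqr x) -> continuous f ->
  (forall x, is_derive x (1 : R) F (f x)) ->
  F x @[x --> +oo] --> l1 -> F x @[x --> -oo] --> l2 ->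
  (\int[mu]_(x in [set: R]) (f x)%:E = (l1 - l2)%:E)%E.
Proof.
move=> f_le f_cont F_deriv F_l1 F_l2.
(* Adding the majorant h, whose antiderivative is M atan, makes the integrand
   nonnegative. *)
pose h x := M / oneDsqr x; pose H x := M * atan x.
have h_ge0 x : 0 <= h x.
  by rewrite mulr_ge0 ?(dominated_ge0 f_le) // invr_ge0 ltW ?oneDsqr_gt0.
have h_le x : `|h x| <= M / oneDsqr x by rewrite ger0_norm.
have h_cont : continuous h.
  rewrite (_ : h = cst M \* (fun x => (oneDsqr x)^-1)) //.
  by move=> x; apply: continuousM; [exact: cst_continuous | exact: continuous_oneDsqrV].
have H_deriv x : is_derive x (1 : R) H (h x).
  by apply: is_derive_eq (is_deriveZ M (is_derive1_atan x)) _.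
have H_l1 : H x @[x --> +oo] --> M * (pi / 2) by apply: cvgMl_tmp; exact: cvgy_atan.
have H_l2 : H x @[x --> -oo] --> M * - (pi / 2) by apply: cvgMl_tmp; exact: cvgNy_atan.
have fh_ge0 x : 0 <= f x + h x.
  by rewrite addrC -lerBlDr sub0r; have /ler_normlP[] := f_le x.
have FH_l1 : F x + H x @[x --> +oo] --> l1 + M * (pi / 2) by apply: cvgD.
have FH_l2 : F x + H x @[x --> -oo] --> l2 + M * - (pi / 2) by apply: cvgD.
have := ge0_continuous_FTC_R fh_ge0 (fun x => continuousD (f_cont x) (h_cont x))
  (fun x => is_deriveD (F_deriv x) (H_deriv x)) FH_l1 FH_l2.
under eq_integral do rewrite EFinD.
rewrite integralD //; last 2 first.
- exact: dominated_integrable f_le f_cont.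
- exact: dominated_integrable h_le h_cont.
rewrite (ge0_continuous_FTC_R h_ge0 h_cont H_deriv H_l1 H_l2).
have f_fin := integrable_fin_num measurableT (dominated_integrable f_le f_cont).
rewrite -(fineK f_fin) -EFinD => /eqP; rewrite eqe => /eqP int_f.
by congr EFin; lra.
Qed.

End IntegralR.

Section OmegaFunctional.
Variables (R : realType) (tau t : R).
Notation mu := (@lebesgue_measure R).

Lemma omega_expR : omega tau t = expR \o horner (- potential tau t).
Proof. by apply/funext => x; rewrite /omega /potential /= !hornerE; congr expR; ring. Qed.

Lemma poly_omega_bound (p : {poly R}) :
  exists M, forall x, `|p.[x] * omega tau t x| <= M / oneDsqr x.
Proof.
have [S S_ge0 p_le] := poly_growth p.
have [c c_ge] := cubic_bound tau (t + (size p).+1%:R).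
exists (S * expR c) => x.
rewrite ler_pdivlMr ?oneDsqr_gt0 // normrM (ger0_norm (expR_ge0 _)).
apply: (le_trans (ler_wpM2r (ltW (oneDsqr_gt0 x)) (ler_wpM2r (expR_ge0 _) (p_le x)))).
rewrite -!mulrA ler_wpM2l // mulrCA -exprSr.
have oneDsqr_le : oneDsqr x ^+ (size p).+1 <= expR ((size p).+1%:R * x ^+ 2).
  by rewrite expRM_natl lerXn2r ?nnegrE ?expR_ge0 ?(ltW (oneDsqr_gt0 x)) //; exact: expR_ge1Dx.
apply: (le_trans (ler_wpM2l (expR_ge0 _) oneDsqr_le)).
rewrite /omega -expRD ler_expR.
have := c_ge _ (sqr_ge0 x); rewrite -!exprM /=.
lra.
Qed.

Lemma continuous_poly_omega (p : {poly R}) :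
  continuous (fun x => p.[x] * omega tau t x).
Proof.
move=> x; apply: continuousM; first exact: continuous_horner.
rewrite omega_expR; apply: continuous_comp; first exact: continuous_horner.
exact: continuous_expR.
Qed.

Lemma integrable_poly_omega (p : {poly R}) :
  mu.-integrable [set: R] (fun x => (p.[x] * omega tau t x)%:E).
Proof.
have [M p_le] := poly_omega_bound p.
by apply: (dominated_integrable p_le); exact: continuous_poly_omega.
Qed.

Lemma is_derive_poly_omega (p : {poly R}) x :
  is_derive x (1 : R) (fun y => p.[y] * omega tau t y)
    ((p^`() - p * (potential tau t)^`()).[x] * omega tau t x).
Proof.
rewrite omega_expR.
have d_omega : is_derive x (1 : R) (expR \o horner (- potential tau t))
    (expR (- potential tau t).[x] * (- potential tau t)^`().[x]).
  exact: is_derive1_comp.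
apply: is_derive_eq (is_deriveM (is_derive_poly p x) d_omega) _.
by rewrite /= derivN !hornerE /GRing.scale /=; ring.
Qed.

End OmegaFunctional.

Definition omega_functional (R : realType) (tau t : R) (p : {poly R}) : R :=
  fine (\int[@lebesgue_measure R]_(x in [set: R]) (p.[x] * omega tau t x)%:E).

Lemma omega_functional_is_linear (R : realType) (tau t : R) :
  linear (omega_functional tau t : {poly R} -> R^o).
Proof.
have fin p := integrable_fin_num measurableT (integrable_poly_omega tau t p).
move=> a p q; rewrite /omega_functional.
transitivity (fine
    (a%:E * \int[@lebesgue_measure R]_(x in [set: R]) (p.[x] * omega tau t x)%:E
     + \int[@lebesgue_measure R]_(x in [set: R]) (q.[x] * omega tau t x)%:E)%E).
  rewrite -integralZl ?integrable_poly_omega //.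
  rewrite -integralD ?integrableZl ?integrable_poly_omega //; congr fine.
  by apply: eq_integral => x _; rewrite hornerD hornerZ -EFinM -EFinD mulrDl mulrA.
by rewrite fineD ?fin_numM ?fineM.
Qed.

HB.instance Definition _ (R : realType) (tau t : R) :=
  GRing.isLinear.Build R {poly R} R^o _ (omega_functional tau t)
    (omega_functional_is_linear tau t).

Section OmegaFunctionalProperties.
Variables (R : realType) (tau t : R).
Notation mu := (@lebesgue_measure R).

Lemma omega_functional_deriv (p : {poly R}) :
  omega_functional tau t p^`() = omega_functional tau t (p * (potential tau t)^`()).
Proof.
have [M dp_le] := poly_omega_bound tau t (p^`() - p * (potential tau t)^`()).
have [N p_le] := poly_omega_bound tau t p.
have int0 : (\int[mu]_(x in [set: R])
    ((p^`() - p * (potential tau t)^`()).[x] * omega tau t x)%:E = 0%:E)%E.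
  rewrite -(subrr 0); apply: (dominated_continuous_FTC_R dp_le).
  - exact: continuous_poly_omega.
  - exact: is_derive_poly_omega.
  - exact: dominated_cvgy0 p_le.
  - exact: dominated_cvgNy0 p_le.
by apply/eqP; rewrite -subr_eq0 -linearB /= /omega_functional int0.
Qed.

Lemma omega_functional1_gt0 : 0 < omega_functional tau t 1.
Proof.
set k := -1 - `|tau| - `|t|.
have omega_ge x : 0 <= x <= 1 -> expR k <= omega tau t x.
  move=> /andP[x_ge0 x_le1]; rewrite ler_expR.
  have pow_ge0 n : 0 <= x ^+ n by rewrite exprn_ge0.
  have coef_ge c n : - `|c| <= c * x ^+ n.
    rewrite lerNl (le_trans (ler_norm _)) // normrN normrM (ger0_norm (pow_ge0 n)).
    by rewrite ler_piMr ?normr_ge0 ?exprn_ile1.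
  have := exprn_ile1 6 x_ge0 x_le1; have := coef_ge tau 4; have := coef_ge t 2.
  by rewrite /k; lra.
have omega_m : measurable_fun [set: R] (fun x => (1.[x] * omega tau t x)%:E).
  apply/measurable_EFinP; apply: continuous_measurable_fun.
  exact: continuous_poly_omega.
have : ((expR k)%:E <= \int[mu]_(x in [set: R]) (1.[x] * omega tau t x)%:E)%E.
  apply: (@le_trans _ _ (\int[mu]_(x in `[0%R, 1%R]) (1.[x] * omega tau t x)%:E)%E).
    apply: (@le_trans _ _ (\int[mu]_(x in `[0%R, 1%R]) (expR k)%:E)%E).
      rewrite integral_cst //= lebesgue_measure_itv /= lte_fin ltr01 /=.
      by rewrite oppr0 adde0 mule1.
    apply: ge0_le_integral => //=; first exact: measurable_funS omega_m.
    by move=> x; rewrite in_itv /= lee_fin hornerC mul1r; exact: omega_ge.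
  apply: ge0_subset_integral => //= x _.
  by rewrite lee_fin hornerC mul1r /omega expR_ge0.
have fin := integrable_fin_num measurableT (integrable_poly_omega tau t 1).
by rewrite /omega_functional -(fineK fin) lee_fin => /(lt_le_trans (expR_gt0 k)).
Qed.

End OmegaFunctionalProperties.

Lemma recurrence_coeffs_rec (R : realType) (P : nat -> {poly R}) (beta : nat -> R) :
  recurrence_coeffs P beta -> forall n, P n.+1 = 'X * P n - (beta n)%:P * P n.-1.
Proof.
move=> [_ [beta0 [_ [P1 P_rec]]]] [|n]; first by rewrite P1 beta0 mul0r subr0.
by rewrite P_rec // mul_polyC.
Qed.

Unset Implicit Arguments.

Theorem theorem4p4 (R : realType) (tau t : R) (P : nat -> {poly R})
  (beta : nat -> R) :
  monic_OPS tau t P -> recurrence_coeffs P beta ->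
  forall n : nat, (1 <= n)%N ->
  forall x : R, denR tau t beta n x != 0 -> denT tau t beta n x != 0 ->
    (P n)^`(2).[x] + Rn tau t beta n x * (P n)^`().[x]
    + Tn tau t beta n x * (P n).[x] = 0.
Proof.
move=> [P_spec P_orth] P_coeffs n n_ge1 x denR_neq0 denT_neq0.
have P_rec := recurrence_coeffs_rec P_coeffs.
have [P0 [beta0 [beta_gt0 _]]] := P_coeffs.
have L_orth m k : m <> k -> omega_functional tau t (P m * P k) = 0.
  move=> neq_mk; rewrite /omega_functional.
  by under eq_integral do rewrite hornerM; rewrite P_orth.
have L_P0 : 0 < omega_functional tau t (P 0 * P 0).
  by rewrite P0 mulr1; exact: omega_functional1_gt0.
apply: (lowering_ode P_rec _ n_ge1 denR_neq0 denT_neq0) => k.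
apply: (deriv_P (L := omega_functional tau t : {linear {poly R} -> R^o})) => //.
- by move=> m; have [] := P_spec m.
- by move=> m; have [] := P_spec m.
- exact: omega_functional_deriv.
Qed.
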